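(* Consider a spherically symmetric spacetime in the setting described in the context, belonging to Case 2 (that is, $\partial_v r_->0$). Then the spacetime is either of Type 1 or of Type 2, i.e. $-1<U^{(+)}_0<U^{(+)}_\infty\le U^{(-)}_\infty<U^{(-)}_0<+1$, with $U^{(+)}_\infty=U^{(-)}_\infty$ (Type 1) or $U^{(+)}_\infty<U^{(-)}_\infty$ (Type 2).
   Context: Consider a spherically symmetric spacetime with metric $ds^2=-f(v,r)A(v,r)^2dv^2+2A(v,r)\,dr\,dv+r^2d\Omega^2$, where $d\Omega^2$ is the unit 2-sphere metric, $A>0$, $\lim_{r\to\infty}f=\lim_{r\to\infty}A=1$, and $f(v,0)=1$, $\partial_rf(v,0)=0$, $\partial_rA(v,0)=0$. It is assumed that $f(v,\cdot)=0$ has exactly two roots $r_+(v)>r_-(v)$ (the outer and inner apparent horizons, AHs), so $f(v,r)=F(v,r)(r-r_+(v))(r-r_-(v))$ with $F>0$; set $h=AF>0$. Standing assumptions: (1) $\partial_v r_+<0$; (2) $\lim_{v\to\infty}r_\pm(v)=r_c$; (3) the sign of $\partial_v r_-$ never changes; (4) the limits as $v\to\infty$ of $A,F,h$ behave as analytic functions of $r$, so all $\partial_r^n h(v,r)$ converge to finite values as $v\to\infty$; $h_c:=\lim_{v\to\infty}h(v,r_c)$. Put $x=r-r_c$, $x_\pm(v)=r_\pm(v)-r_c$ (so $x_\pm\to 0$), and regard $h$ as a function of $(v,x)$. Radially outgoing null geodesics are the solutions of $dx/dv=\tfrac12 h(v,x)(x-x_+(v))(x-x_-(v))$. Compactified outgoing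 null coordinate: fix $v_0$ and work in $v\ge v_0$; set $U=\frac{2}{\pi}\arctan((v-v_0)/r_c)$ on $\{r=0,\,v\ge v_0\}$ and $U=-\frac{2}{\pi}\arctan(r/r_c)$ on $\{v=v_0,\,r>0\}$, and extend $U$ by requiring it to be constant along each radially outgoing null geodesic; $U$ ranges over $[-1,1]$. The outer and inner AHs lie at $U=U^{(\pm)}(v)$; $U^{(\pm)}_0=U^{(\pm)}(v_0)$ and $U^{(\pm)}_\infty=\lim_{v\to\infty}U^{(\pm)}(v)$. A Case 2 spacetime is of Type 1 if $U^{(+)}_\infty=U^{(-)}_\infty$ and of Type 2 if $U^{(+)}_\infty<U^{(-)}_\infty$. *)

From Stdlib Require Import Reals.
From Coquelicot Require Import Coquelicot.
Open Scope R_scope.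

Definition smooth_vr (G : R -> R -> R) : Prop :=
  (forall n v r, ex_derive_n (G v) n r) /\
  (forall n v r, continuous (fun p : R * R => Derive_n (G (fst p)) n (snd p)) (v, r)).

(* Right-hand side of the radially outgoing null geodesic equation
   dr/dv = 1/2 h(v,r) (r - r_+(v)) (r - r_-(v)),  with h = A F
   (equivalently dr/dv = f A / 2, from ds^2 = 0). *)
Definition outgoing_rhs (A F : R -> R -> R) (rp rm : R -> R) (v r : R) : R :=
  / 2 * (A v r * F v r) * (r - rp v) * (r - rm v).

Definition outgoing_null_geodesic (A F : R -> R -> R) (rp rm : R -> R)
    (g : R -> R) (a b : R) : Prop :=
  forall v, a <= v <= b -> 0 <= g v /\ is_derive g v (outgoing_rhs A F rp rm v (g v)).

Definition compactified_U (A F : R -> R -> R) (rp rm : R -> R) (rc v0 : R)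
    (U : R -> R -> R) : Prop :=
  (forall v, v0 <= v -> U v 0 = 2 / PI * atan ((v - v0) / rc)) /\
  (forall r, 0 < r -> U v0 r = - (2 / PI * atan (r / rc))) /\
  (forall g a b, v0 <= a <= b -> outgoing_null_geodesic A F rp rm g a b ->
     forall v, a <= v <= b -> U v (g v) = U a (g a)).

Definition type1 (Upinf Uminf : R) : Prop := Upinf = Uminf.
Definition type2 (Upinf Uminf : R) : Prop := Upinf < Uminf.

(* U is constant along outgoing rays and equals -(2/PI) atan (r / r_c) on v = v0, so
   U(v, r_+(v)) and U(v, r_-(v)) are read off at the radius where the outgoing ray through
   that horizon point started at v = v0.  After clamping the right-hand side of the ray
   equation to the strip v0 <= v <= V, r_-(v0) <= r <= r_+(v0), it is bounded and Lipschitz,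
   so rays exist through every point and never cross.  A ray reaching the outer horizon at v
   was strictly inside it before (r_+ decreases while dr/dv = 0 on the horizon) and stayed
   above r_c (where dr/dv < 0); a ray reaching the inner horizon was strictly outside it
   before (r_- increases).  Hence these rays stay in the strip, are genuine geodesics, and
   non-crossing shows that the starting radius of the ray through (v, r_+(v)) decreases with
   v, that of the ray through (v, r_-(v)) increases, and the former exceeds the latter.  So
   U(v, r_+(v)) increases, U(v, r_-(v)) decreases, the first stays below the second, and both
   converge by monotonicity. *)

From Stdlib Require Import Reals Lra Psatz Classical ClassicalEpsilon.
From Stdlib Require List.
From Coquelicot Require Import Coquelicot.
Open Scope R_scope.

Lemma continuous_of_lipschitz (f : R -> R) (t K : R) :
  (forall y, Rabs (f y - f t) <= K * Rabs (y - t)) -> continuous f t.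
Proof.
  intros Hf. apply filterlim_locally. intros eps.
  assert (HK : 0 < Rabs K + 1) by (pose proof (Rabs_pos K); lra).
  exists (mkposreal _ (Rdiv_lt_0_compat _ _ (cond_pos eps) HK)).
  intros y Hy. change (Rabs (y - t) < eps / (Rabs K + 1)) in Hy.
  change (Rabs (f y - f t) < eps).
  pose proof (Hf y). pose proof (Rle_abs K). pose proof (Rabs_pos (y - t)).
  assert ((Rabs K + 1) * (eps / (Rabs K + 1)) = eps) by (field; lra).
  nra.
Qed.

Lemma continuous_locally_pos (f : R -> R) (c : R) :
  continuous f c -> 0 < f c -> exists del, 0 < del /\ forall y, Rabs (y - c) < del -> 0 < f y.
Proof.
  intros Hf Hpos. apply filterlim_locally with (eps := mkposreal _ Hpos) in Hf.
  destruct Hf as [del Hdel]. exists del. split; [apply cond_pos|].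
  intros y Hy. specialize (Hdel y Hy). change (Rabs (f y - f c) < f c) in Hdel.
  apply Rabs_lt_between in Hdel. lra.
Qed.

Lemma is_derive_continuous (f : R -> R) (x d : R) : is_derive f x d -> continuous f x.
Proof. intros Hd. apply (ex_derive_continuous f x). now exists d. Qed.

Lemma is_derive_continuity_pt (f : R -> R) (x d : R) : is_derive f x d -> continuity_pt f x.
Proof. intros Hd. apply continuity_pt_filterlim, (is_derive_continuous f x d Hd). Qed.

Lemma abs_sub_le_of_derive_le (u du w dw : R -> R) (a b : R) : a <= b ->
  (forall s, is_derive u s (du s)) -> (forall s, is_derive w s (dw s)) ->
  (forall s, a <= s <= b -> Rabs (du s) <= dw s) ->
  Rabs (u b - u a) <= w b - w a.
Proof.
  intros Hab Hu Hw Hbound.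
  destruct (MVT_gen (fun s => u s - w s) a b (fun s => du s - dw s)) as [c [Hc Hmvt]].
  { intros x _. exact (is_derive_minus _ _ _ _ _ (Hu x) (Hw x)). }
  { intros x _. exact (is_derive_continuity_pt _ _ _ (is_derive_minus _ _ _ _ _ (Hu x) (Hw x))). }
  destruct (MVT_gen (fun s => u s + w s) a b (fun s => du s + dw s)) as [c' [Hc' Hmvt']].
  { intros x _. exact (is_derive_plus _ _ _ _ _ (Hu x) (Hw x)). }
  { intros x _. exact (is_derive_continuity_pt _ _ _ (is_derive_plus _ _ _ _ _ (Hu x) (Hw x))). }
  rewrite Rmin_left, Rmax_right in Hc, Hc' by lra.
  pose proof (proj1 (Rabs_le_between _ _) (Hbound c Hc)).
  pose proof (proj1 (Rabs_le_between _ _) (Hbound c' Hc')).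
  apply Rabs_le. split; nra.
Qed.

Lemma le_0_of_le_div_pow2 (a c : R) : (forall n, a <= c / 2 ^ n) -> a <= 0.
Proof.
  intros H.
  assert (Hlim : is_lim_seq (fun n => c / 2 ^ n) 0).
  { apply is_lim_seq_ext with (fun n => c * (/ 2) ^ n).
    { intros n. unfold Rdiv. now rewrite pow_inv. }
    replace (Finite 0) with (Rbar_mult c 0) by (simpl; f_equal; ring).
    apply is_lim_seq_scal_l, is_lim_seq_geom. rewrite Rabs_pos_eq; lra. }
  exact (is_lim_seq_le _ _ a 0 H (is_lim_seq_const a) Hlim).
Qed.

Lemma eq_0_of_abs_le_div_pow2 (a c : R) : (forall n, Rabs a <= c / 2 ^ n) -> a = 0.
Proof.
  intros H. apply le_0_of_le_div_pow2 in H. pose proof (Rabs_pos a).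
  apply Rabs_eq_0. lra.
Qed.

Lemma lipschitz_on_of_derive_bounded (f df : R -> R) (c d K : R) :
  (forall z, is_derive f z (df z)) -> (forall z, c <= z <= d -> Rabs (df z) <= K) ->
  forall z1 z2, c <= z1 <= d -> c <= z2 <= d -> Rabs (f z1 - f z2) <= K * Rabs (z1 - z2).
Proof.
  intros Hf Hdf z1 z2 Hz1 Hz2.
  destruct (MVT_gen f z2 z1 df) as [m [[Hm1 Hm2] ->]].
  { intros x _. apply Hf. }
  { intros x _. apply is_derive_continuity_pt with (df x), Hf. }
  rewrite Rabs_mult. apply Rmult_le_compat_r; [apply Rabs_pos|]. apply Hdf. split.
  - eapply Rle_trans; [|exact Hm1]. apply Rmin_glb; lra.
  - eapply Rle_trans; [exact Hm2|]. apply Rmax_lub; lra.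
Qed.

Lemma is_derive_const_plus_RInt (f : R -> R) (a c t : R) : (forall s, continuous f s) ->
  is_derive (fun t => c + RInt f a t) t (f t).
Proof.
  intros Hf.
  assert (HI : is_derive (RInt f a) t (f t)).
  { apply is_derive_RInt with a; [|apply Hf].
    exists (mkposreal 1 Rlt_0_1). intros y _. apply RInt_correct.
    apply ex_RInt_continuous. intros z _. apply Hf. }
  pose proof (is_derive_plus _ _ _ _ _ (is_derive_const c t) HI) as H.
  rewrite plus_zero_l in H. exact H.
Qed.

Lemma small_step_below (del a b : R) : 0 < del -> a < b -> exists h, 0 < h < del /\ a + h < b.
Proof.
  intros Hdel Hab. exists (Rmin del (b - a) / 2).
  pose proof (Rmin_l del (b - a)). pose proof (Rmin_r del (b - a)).
  pose proof (Rmin_glb_lt del (b - a) 0 Hdel ltac:(lra)). lra.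
Qed.

Lemma derive_neg_local (f : R -> R) (c d : R) : is_derive f c d -> d < 0 ->
  exists del, 0 < del /\ forall h, 0 < h < del -> f (c + h) < f c < f (c - h).
Proof.
  intros Hd Hneg. apply is_derive_Reals in Hd.
  destruct (Hd (- d / 2) ltac:(lra)) as [del Hdel].
  exists del. split; [apply cond_pos|]. intros h Hh.
  assert (Hq : forall k, k <> 0 -> Rabs k < del -> (f (c + k) - f c) / k < d / 2).
  { intros k Hk Hkd. specialize (Hdel k Hk Hkd). apply Rabs_lt_between in Hdel. lra. }
  pose proof (Hq h ltac:(lra) ltac:(rewrite Rabs_pos_eq; lra)) as H1.
  pose proof (Hq (- h) ltac:(lra) ltac:(rewrite Rabs_Ropp, Rabs_pos_eq; lra)) as H2.
  replace (c - h) with (c + - h) by ring.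
  assert ((f (c + h) - f c) / h * h = f (c + h) - f c) by (field; lra).
  assert ((f (c + - h) - f c) / - h * h = f c - f (c + - h)) by (field; lra).
  split; nra.
Qed.

(* At the last point c of [a, b] with D c <= 0, D would still be negative just after c. *)
Lemma pos_of_derive_neg_at_zeros (D : R -> R) (a b : R) : a <= b ->
  (forall x, continuous D x) -> 0 < D b ->
  (forall c, a <= c <= b -> D c = 0 -> exists d, is_derive D c d /\ d < 0) ->
  0 < D a.
Proof.
  intros Hab Hcont Hb Hzero.
  destruct (Rlt_or_le 0 (D a)) as [|Ha]; [assumption|exfalso].
  set (Z := fun s => a <= s <= b /\ D s <= 0).
  destruct (completeness Z) as [c [Hub Hlub]].
  { exists b. intros s [Hs _]. apply Hs. }
  { exists a. split; [lra | assumption]. }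
  assert (Hac : a <= c) by (apply Hub; split; [lra | assumption]).
  assert (Hcb : c <= b) by (apply Hlub; intros s [Hs _]; apply Hs).
  assert (Hafter : forall y, c < y <= b -> 0 < D y).
  { intros y Hy. destruct (Rlt_or_le 0 (D y)) as [|HDy]; [assumption|].
    assert (y <= c) by (apply Hub; split; [lra | assumption]). lra. }
  assert (Hc : D c <= 0).
  { destruct (Rle_or_lt (D c) 0) as [|Hpos]; [assumption|exfalso].
    destruct (continuous_locally_pos D c (Hcont c) Hpos) as [del [Hdel Hnear]].
    assert (c <= c - del / 2); [|lra].
    apply Hlub. intros s [Hs HDs]. destruct (Rle_or_lt s (c - del / 2)); [assumption|].
    assert (s <= c) by (apply Hub; split; assumption).
    assert (0 < D s) by (apply Hnear, Rabs_lt_between; lra). lra. }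
  assert (Hcb' : c < b) by (destruct (Req_dec c b); [subst; lra | lra]).
  destruct (Req_dec (D c) 0) as [Hc0|Hcneg].
  - destruct (Hzero c (conj Hac Hcb) Hc0) as [d [Hd Hdneg]].
    destruct (derive_neg_local D c d Hd Hdneg) as [del [Hdel Hloc]].
    destruct (small_step_below del c b Hdel Hcb') as [h [Hh Hchb]].
    pose proof (Hafter (c + h) ltac:(lra)). pose proof (Hloc h Hh). lra.
  - destruct (continuous_locally_pos (fun s => - D s) c (continuous_opp D c (Hcont c)))
      as [del [Hdel Hnear]]; [lra|].
    destruct (small_step_below del c b Hdel Hcb') as [h [Hh Hchb]].
    pose proof (Hafter (c + h) ltac:(lra)).
    assert (0 < - D (c + h)) by (apply Hnear, Rabs_lt_between; lra). lra.
Qed.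

Lemma pos_before_zero_of_derive_neg_at_zeros (D : R -> R) (a v : R) :
  (forall x, continuous D x) -> D v = 0 ->
  (forall c, a <= c <= v -> D c = 0 -> exists d, is_derive D c d /\ d < 0) ->
  forall s, a <= s < v -> 0 < D s.
Proof.
  intros Hcont Hv Hzero s Hs.
  destruct (Hzero v ltac:(lra) Hv) as [d [Hd Hneg]].
  destruct (derive_neg_local D v d Hd Hneg) as [del [Hdel Hloc]].
  destruct (small_step_below del s v Hdel ltac:(lra)) as [h [Hh Hshv]].
  apply (pos_of_derive_neg_at_zeros D s (v - h)); [lra | assumption | |].
  - pose proof (Hloc h Hh). lra.
  - intros c Hc. apply Hzero. lra.
Qed.

Lemma strict_incr_of_derive_pos (f : R -> R) :
  (forall v, exists d, is_derive f v d /\ 0 < d) -> forall x y, x < y -> f x < f y.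
Proof.
  intros Hf x y Hxy.
  apply (incr_function f m_infty p_infty (Derive f)); simpl; auto;
    intros v _ _; destruct (Hf v) as [d [Hd Hpos]]; rewrite (is_derive_unique _ _ _ Hd);
    assumption.
Qed.

Lemma lt_lim_of_strict_incr (f : R -> R) (l : R) :
  (forall x y, x < y -> f x < f y) -> is_lim f p_infty l -> forall x, f x < l.
Proof.
  intros Hinc Hl x.
  assert (Hle : Rbar_le (f (x + 1)) l).
  { apply (is_lim_le_loc (fun _ => f (x + 1)) f p_infty); [| apply is_lim_const | exact Hl].
    exists (x + 1). intros y Hy. left. apply Hinc, Hy. }
  pose proof (Hinc x (x + 1) ltac:(lra)). simpl in Hle. lra.
Qed.

Lemma incr_bounded_lim (f : R -> R) (v0 B : R) :
  (forall x y, v0 <= x -> x < y -> f x < f y) -> (forall x, v0 <= x -> f x <= B) ->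
  exists l : R, is_lim f p_infty l /\ (forall x, v0 <= x -> f x < l) /\
    (forall B', (forall x, v0 <= x -> f x <= B') -> l <= B').
Proof.
  intros Hinc HB.
  set (E := fun y => exists x, v0 <= x /\ y = f x).
  destruct (completeness E) as [l [Hub Hlub]].
  { exists B. intros y [x [Hx ->]]. auto. }
  { exists (f v0), v0. split; [lra | reflexivity]. }
  assert (Hle : forall x, v0 <= x -> f x <= l) by (intros x Hx; apply Hub; exists x; auto).
  exists l. split; [|split].
  - apply is_lim_spec. intros eps. simpl.
    destruct (classic (exists x, v0 <= x /\ l - eps < f x)) as [[x1 [Hx1 Hf1]]|Hnone].
    + exists x1. intros x Hx. specialize (Hinc x1 x Hx1 Hx). specialize (Hle x ltac:(lra)).
      apply Rabs_lt_between. lra.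
    + assert (l <= l - eps); [|pose proof (cond_pos eps); lra].
      apply Hlub. intros y [x [Hx ->]]. apply Rnot_lt_le. intros Hlt. apply Hnone. eauto.
  - intros x Hx. pose proof (Hinc x (x + 1) Hx ltac:(lra)). pose proof (Hle (x + 1) ltac:(lra)).
    lra.
  - intros B' HB'. apply Hlub. intros y [x [Hx ->]]. auto.
Qed.

Lemma incr_decr_limits (P M : R -> R) (v0 : R) :
  (forall v w, v0 <= v -> v < w -> P v < P w) ->
  (forall v w, v0 <= v -> v < w -> M w < M v) ->
  (forall v, v0 <= v -> P v < M v) ->
  exists lp lm : R, is_lim P p_infty lp /\ is_lim M p_infty lm /\
    P v0 < lp /\ lp <= lm /\ lm < M v0.
Proof.
  intros HP HM HPM.
  assert (Hcross : forall v w, v0 <= v -> v0 <= w -> P v < M w).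
  { intros v w Hv Hw. destruct (Rtotal_order v w) as [Hlt|[<-|Hgt]].
    - pose proof (HP v w Hv Hlt). pose proof (HPM w Hw). lra.
    - apply HPM, Hv.
    - pose proof (HM w v Hw Hgt). pose proof (HPM v Hv). lra. }
  destruct (incr_bounded_lim P v0 (M v0)) as [lp [HlimP [HPlt HPsup]]].
  { exact HP. }
  { intros x Hx. left. apply Hcross; lra. }
  destruct (incr_bounded_lim (fun v => - M v) v0 (- P v0)) as [l [HlimM [HMlt HMsup]]].
  { intros x y Hx Hxy. pose proof (HM x y Hx Hxy). lra. }
  { intros x Hx. pose proof (Hcross v0 x ltac:(lra) Hx). lra. }
  exists lp, (- l). split; [exact HlimP|]. split.
  { apply is_lim_ext with (fun v => - - M v); [intros v; ring|].
    exact (is_lim_opp _ p_infty l HlimM). }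
  split; [apply HPlt; lra|]. split.
  - apply HPsup. intros x Hx. enough (l <= - P x) by lra.
    apply HMsup. intros y Hy. pose proof (Hcross x y Hx Hy). lra.
  - pose proof (HMlt v0 ltac:(lra)). lra.
Qed.

Definition exp_weight (L t0 s : R) : R := exp (2 * L * Rabs (s - t0)).

Lemma exp_weight_ge_1 (L t0 s : R) : 0 <= L -> 1 <= exp_weight L t0 s.
Proof.
  intros HL. unfold exp_weight. pose proof (Rabs_pos (s - t0)).
  pose proof (exp_ineq1_le (2 * L * Rabs (s - t0))). nra.
Qed.

(* With the rate 2L, integrating a derivative bounded by L D w from t0 gives at most
   D/2 w: Picard iteration contracts by 1/2 in the weighted sup norm (Bielecki's trick). *)
Lemma exp_weight_halving (u du : R -> R) (L D t0 : R) : 0 < L -> 0 <= D ->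
  (forall s, is_derive u s (du s)) -> u t0 = 0 ->
  (forall s, Rabs (du s) <= L * D * exp_weight L t0 s) ->
  forall t, Rabs (u t) <= D / 2 * exp_weight L t0 t.
Proof.
  intros HL HD Hu Hu0 Hdu t. unfold exp_weight in *.
  destruct (Rle_or_lt t0 t) as [Ht|Ht].
  - rewrite (Rabs_pos_eq (t - t0)) by lra.
    pose proof (exp_pos (2 * L * (t - t0))).
    assert (Hcmp := abs_sub_le_of_derive_le u du (fun s => D / 2 * exp (2 * L * (s - t0)))
                      (fun s => D * L * exp (2 * L * (s - t0))) t0 t Ht Hu).
    rewrite Hu0, Rminus_0_r, Rminus_diag, Rmult_0_r, exp_0 in Hcmp.
    enough (Rabs (u t) <= D / 2 * exp (2 * L * (t - t0)) - D / 2 * 1) by nra.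
    apply Hcmp.
    + intros s. auto_derive; [exact I | unfold Rminus; field].
    + intros s Hs. rewrite <- (Rabs_pos_eq (s - t0)) by lra.
      specialize (Hdu s). lra.
  - rewrite (Rabs_left (t - t0)) by lra.
    pose proof (exp_pos (2 * L * - (t - t0))).
    assert (Hcmp := abs_sub_le_of_derive_le u du (fun s => - (D / 2) * exp (2 * L * - (s - t0)))
                      (fun s => D * L * exp (2 * L * - (s - t0))) t t0 ltac:(lra) Hu).
    rewrite Hu0, Rabs_minus_sym, Rminus_0_r, Rminus_diag, Ropp_0, Rmult_0_r, exp_0 in Hcmp.
    enough (Rabs (u t) <= - (D / 2) * 1 - - (D / 2) * exp (2 * L * - (t - t0))) by nra.
    apply Hcmp.
    + intros s. auto_derive; [exact I | unfold Rminus; field].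
    + intros s Hs. rewrite <- (Rabs_left1 (s - t0)) by lra.
      specialize (Hdu s). lra.
Qed.

Lemma eq_0_of_weighted_lipschitz (u du : R -> R) (L D t0 : R) : 0 < L -> 0 <= D ->
  (forall s, is_derive u s (du s)) -> u t0 = 0 ->
  (forall s, Rabs (du s) <= L * Rabs (u s)) ->
  (forall s, Rabs (u s) <= D * exp_weight L t0 s) ->
  forall t, u t = 0.
Proof.
  intros HL HD Hu Hu0 Hlip Hbound t.
  assert (Hn : forall n s, Rabs (u s) <= D / 2 ^ n * exp_weight L t0 s).
  { induction n as [|n IH]; intros s.
    - rewrite pow_O, Rdiv_1_r. apply Hbound.
    - pose proof (pow_lt 2 n ltac:(lra)).
      replace (D / 2 ^ S n) with (D / 2 ^ n / 2) by (simpl; field; lra).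
      apply exp_weight_halving with du; auto.
      + apply Rdiv_le_0_compat; lra.
      + intros s'. rewrite Rmult_assoc. eapply Rle_trans; [apply Hlip|].
        apply Rmult_le_compat_l; [lra | apply IH]. }
  apply eq_0_of_abs_le_div_pow2 with (D * exp_weight L t0 t). intros n.
  specialize (Hn n t). unfold Rdiv in *. lra.
Qed.

Lemma halving_steps_telescope (a : nat -> R) (c : R) :
  (forall n, Rabs (a (S n) - a n) <= c / 2 ^ S n) ->
  forall n k, Rabs (a (k + n)%nat - a n) <= c / 2 ^ n - c / 2 ^ (k + n).
Proof.
  intros Hstep n k. induction k as [|k IH].
  - rewrite Rminus_diag, Rabs_R0, Rminus_diag. lra.
  - set (m := (k + n)%nat) in *. change (S k + n)%nat with (S m).
    pose proof (Rabs_triang (a (S m) - a m) (a m - a n)).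
    pose proof (Hstep m). pose proof (pow_lt 2 m ltac:(lra)).
    replace (c / 2 ^ S m) with (c / 2 ^ m / 2) in * by (simpl; field; lra).
    replace (a (S m) - a m + (a m - a n)) with (a (S m) - a n) in * by ring.
    lra.
Qed.

Lemma limit_of_halving_steps (a : nat -> R) (c : R) :
  (forall n, Rabs (a (S n) - a n) <= c / 2 ^ S n) ->
  {l | forall n, Rabs (l - a n) <= c / 2 ^ n}.
Proof.
  intros Hstep.
  assert (Hc : 0 <= c).
  { pose proof (Rle_trans _ _ _ (Rabs_pos _) (Hstep 0%nat)). simpl in *. lra. }
  assert (Htube : forall m n, a m - c / 2 ^ m <= a n + c / 2 ^ n).
  { intros m n. pose proof (Rdiv_le_0_compat c (2 ^ m) Hc (pow_lt 2 m ltac:(lra))).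
    pose proof (Rdiv_le_0_compat c (2 ^ n) Hc (pow_lt 2 n ltac:(lra))).
    destruct (Nat.le_ge_cases m n) as [Hle|Hle];
      destruct (Nat.le_exists_sub _ _ Hle) as [k [-> _]].
    - pose proof (halving_steps_telescope a c Hstep m k) as Hk.
      apply Rabs_le_between in Hk. lra.
    - pose proof (halving_steps_telescope a c Hstep n k) as Hk.
      apply Rabs_le_between in Hk. lra. }
  set (E := fun y => exists n, y = a n - c / 2 ^ n).
  destruct (completeness E) as [l [Hub Hlub]].
  { exists (a 0%nat + c / 2 ^ 0). intros y [m ->]. apply Htube. }
  { exists (a 0%nat - c / 2 ^ 0). now exists 0%nat. }
  exists l. intros n. apply Rabs_le_between.
  assert (a n - c / 2 ^ n <= l) by (apply Hub; now exists n).
  assert (l <= a n + c / 2 ^ n) by (apply Hlub; intros y [m ->]; apply Htube).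
  lra.
Qed.

(** * Lipschitz ODEs: uniqueness and Picard existence *)

Section LipschitzODE.

Variable Phi : R -> R -> R.
Variables K L : R.
Hypothesis Phi_bounded : forall s x, Rabs (Phi s x) <= K.
Hypothesis L_pos : 0 < L.
Hypothesis Phi_lipschitz : forall s x y, Rabs (Phi s x - Phi s y) <= L * Rabs (x - y).
Hypothesis Phi_continuous : forall p, continuous (fun p : R * R => Phi (fst p) (snd p)) p.

Definition ode_solution (g : R -> R) : Prop := forall t, is_derive g t (Phi t (g t)).

Let K_nonneg : 0 <= K.
Proof. pose proof (Phi_bounded 0 0). pose proof (Rabs_pos (Phi 0 0)). lra. Qed.

Let K_div_L_nonneg : 0 <= K / L.
Proof. apply Rdiv_le_0_compat; [exact K_nonneg | exact L_pos]. Qed.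

Lemma continuous_Phi_along (g : R -> R) : (forall t, continuous g t) ->
  forall t, continuous (fun s => Phi s (g s)) t.
Proof.
  intros Hg t.
  exact (continuous_comp_2 (fun s => s) g Phi t (continuous_id t) (Hg t) (Phi_continuous (t, g t))).
Qed.

Lemma ode_solution_unique (g1 g2 : R -> R) (t1 : R) : ode_solution g1 -> ode_solution g2 ->
  g1 t1 = g2 t1 -> forall t, g1 t = g2 t.
Proof.
  intros H1 H2 E t.
  assert (Hd : forall s, is_derive (fun s => g1 s - g2 s) s (Phi s (g1 s) - Phi s (g2 s)))
    by (intros s; exact (is_derive_minus _ _ _ _ _ (H1 s) (H2 s))).
  assert (Hbound : forall s, Rabs (g1 s - g2 s) <= K / L * exp_weight L t1 s).
  { intros s. replace (K / L) with (2 * (K / L) / 2) by (field; lra).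
    apply (exp_weight_halving (fun s => g1 s - g2 s) (fun s => Phi s (g1 s) - Phi s (g2 s)));
      [assumption | lra | exact Hd | rewrite E; ring |].
    intros s'. pose proof (exp_weight_ge_1 L t1 s' ltac:(lra)).
    replace (L * (2 * (K / L)) * exp_weight L t1 s') with (2 * K * exp_weight L t1 s')
      by (field; lra).
    eapply Rle_trans; [apply Rabs_triang|]. rewrite Rabs_Ropp.
    pose proof (Phi_bounded s' (g1 s')). pose proof (Phi_bounded s' (g2 s')). nra. }
  enough (g1 t - g2 t = 0) by lra.
  apply (eq_0_of_weighted_lipschitz _ _ L (K / L) t1 L_pos K_div_L_nonneg Hd);
    [cbv beta; rewrite E; ring | intros s; apply Phi_lipschitz | exact Hbound].
Qed.

Lemma ode_solutions_keep_order (g1 g2 : R -> R) (a b : R) : ode_solution g1 -> ode_solution g2 ->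
  g1 b < g2 b -> g1 a < g2 a.
Proof.
  intros H1 H2 Hb. destruct (Rlt_or_le (g1 a) (g2 a)) as [|Ha]; [assumption|exfalso].
  destruct (IVT_gen (fun t => g2 t - g1 t) a b 0) as [c [_ Hc]].
  { intros x. exact (is_derive_continuity_pt _ _ _ (is_derive_minus _ _ _ _ _ (H2 x) (H1 x))). }
  { split; [apply Rle_trans with (g2 a - g1 a); [apply Rmin_l | lra]
           |apply Rle_trans with (g2 b - g1 b); [lra | apply Rmax_r]]. }
  pose proof (ode_solution_unique g1 g2 c H1 H2 ltac:(lra) b). lra.
Qed.

Variables t0 x0 : R.

Fixpoint picard (n : nat) : R -> R :=
  match n with
  | O => fun _ => x0
  | S m => fun t => x0 + RInt (fun s => Phi s (picard m s)) t0 t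
  end.

Lemma picard_derive (n : nat) : (forall t, continuous (picard n) t) /\
  forall t, is_derive (picard (S n)) t (Phi t (picard n t)).
Proof.
  induction n as [|n [_ IH]].
  - assert (C : forall t, continuous (picard 0) t) by (intros t; apply continuous_const).
    split; [exact C|]. intros t.
    apply (is_derive_const_plus_RInt (fun s => Phi s (picard 0 s))), continuous_Phi_along, C.
  - assert (C : forall t, continuous (picard (S n)) t).
    { intros t. apply (ex_derive_continuous (picard (S n))). eexists. apply IH. }
    split; [exact C|]. intros t.
    apply (is_derive_const_plus_RInt (fun s => Phi s (picard (S n) s))), continuous_Phi_along, C.
Qed.

Lemma picard_at_t0 (n : nat) : picard n t0 = x0.
Proof. destruct n; simpl; [reflexivity|]. rewrite RInt_point. unfold zero; simpl; ring. Qed.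

Lemma picard_step_bound (n : nat) (t : R) :
  Rabs (picard (S n) t - picard n t) <= K / L / 2 ^ S n * exp_weight L t0 t.
Proof.
  revert t. induction n as [|n IH]; intros t.
  - replace (K / L / 2 ^ 1) with (K / L / 2) by (simpl; field; lra).
    apply (exp_weight_halving (fun s => picard 1 s - picard 0 s) (fun s => Phi s x0 - 0)); auto.
    + intros s.
      exact (is_derive_minus _ _ _ _ _ (proj2 (picard_derive 0) s) (is_derive_const x0 s)).
    + rewrite !picard_at_t0. ring.
    + intros s. rewrite Rminus_0_r. pose proof (exp_weight_ge_1 L t0 s ltac:(lra)).
      replace (L * (K / L) * exp_weight L t0 s) with (K * exp_weight L t0 s) by (field; lra).
      pose proof (Phi_bounded s x0). nra.
  - pose proof (pow_lt 2 (S n) ltac:(lra)).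
    replace (K / L / 2 ^ S (S n)) with (K / L / 2 ^ S n / 2) by (simpl in *; field; lra).
    apply (exp_weight_halving (fun s => picard (S (S n)) s - picard (S n) s)
             (fun s => Phi s (picard (S n) s) - Phi s (picard n s))); auto.
    + apply Rdiv_le_0_compat; lra.
    + intros s. exact (is_derive_minus _ _ _ _ _ (proj2 (picard_derive (S n)) s)
                                              (proj2 (picard_derive n) s)).
    + rewrite !picard_at_t0. ring.
    + intros s. eapply Rle_trans; [apply Phi_lipschitz|]. rewrite Rmult_assoc.
      apply Rmult_le_compat_l; [lra | apply IH].
Qed.

Lemma picard_lipschitz (n : nat) (t t' : R) : Rabs (picard n t - picard n t') <= K * Rabs (t - t').
Proof.
  destruct n as [|n].
  - simpl. rewrite Rminus_diag, Rabs_R0. apply Rmult_le_pos; [lra | apply Rabs_pos].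
  - apply lipschitz_on_of_derive_bounded
      with (fun s => Phi s (picard n s)) (Rmin t t') (Rmax t t').
    + apply picard_derive.
    + intros s _. apply Phi_bounded.
    + split; [apply Rmin_l | apply Rmax_l].
    + split; [apply Rmin_r | apply Rmax_r].
Qed.

Section PicardLimit.

Variable x : R -> R.
Hypothesis picard_approx :
  forall n t, Rabs (x t - picard n t) <= K / L * exp_weight L t0 t / 2 ^ n.

Lemma picard_limit_at_t0 : x t0 = x0.
Proof.
  enough (x t0 - x0 = 0) by lra.
  apply eq_0_of_abs_le_div_pow2 with (K / L * exp_weight L t0 t0). intros n.
  rewrite <- (picard_at_t0 n) at 1. apply picard_approx.
Qed.

Lemma picard_limit_lipschitz (t t' : R) : Rabs (x t - x t') <= K * Rabs (t - t').
Proof.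
  enough (Rabs (x t - x t') - K * Rabs (t - t') <= 0) by lra.
  apply le_0_of_le_div_pow2 with (K / L * exp_weight L t0 t + K / L * exp_weight L t0 t').
  intros n.
  pose proof (picard_approx n t). pose proof (picard_approx n t').
  pose proof (picard_lipschitz n t t').
  pose proof (Rabs_triang (x t - picard n t) (picard n t - x t')).
  pose proof (Rabs_triang (picard n t - picard n t') (picard n t' - x t')).
  rewrite (Rabs_minus_sym (x t')) in *.
  replace (x t - picard n t + (picard n t - x t')) with (x t - x t') in * by ring.
  replace (picard n t - picard n t' + (picard n t' - x t')) with (picard n t - x t') in * by ring.
  unfold Rdiv in *. rewrite Rmult_plus_distr_r. lra.
Qed.

Lemma picard_limit_solution : ode_solution x.
Proof.
  assert (Hcont : forall t, continuous x t)
    by (intros t; apply continuous_of_lipschitz with K; intros y; apply picard_limit_lipschitz).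
  set (y := fun t => x0 + RInt (fun s => Phi s (x s)) t0 t).
  assert (Hy : forall t, is_derive y t (Phi t (x t)))
    by (intros t; apply (is_derive_const_plus_RInt (fun s => Phi s (x s))),
                        continuous_Phi_along, Hcont).
  assert (Hy_picard :
    forall n t, Rabs (y t - picard (S n) t) <= K / L / 2 ^ n / 2 * exp_weight L t0 t).
  { intros n. pose proof (pow_lt 2 n ltac:(lra)).
    apply (exp_weight_halving (fun s => y s - picard (S n) s)
             (fun s => Phi s (x s) - Phi s (picard n s))); auto.
    - apply Rdiv_le_0_compat; lra.
    - intros s. exact (is_derive_minus _ _ _ _ _ (Hy s) (proj2 (picard_derive n) s)).
    - unfold y. rewrite RInt_point, picard_at_t0. unfold zero; simpl; ring.
    - intros s. eapply Rle_trans; [apply Phi_lipschitz|]. rewrite Rmult_assoc.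
      apply Rmult_le_compat_l; [lra|]. eapply Rle_trans; [apply picard_approx|].
      right. unfold Rdiv. ring. }
  assert (Hxy : forall t, x t = y t).
  { intros t. enough (x t - y t = 0) by lra.
    apply eq_0_of_abs_le_div_pow2 with (K / L * exp_weight L t0 t). intros n.
    pose proof (picard_approx (S n) t). pose proof (Hy_picard n t).
    pose proof (Rabs_triang (x t - picard (S n) t) (picard (S n) t - y t)).
    rewrite (Rabs_minus_sym (picard (S n) t)) in *.
    replace (x t - picard (S n) t + (picard (S n) t - y t)) with (x t - y t) in * by ring.
    pose proof (pow_lt 2 n ltac:(lra)).
    set (e := K / L / 2 ^ n / 2 * exp_weight L t0 t) in *.
    replace (K / L * exp_weight L t0 t / 2 ^ S n) with e in * by (unfold e; simpl; field; lra).
    replace (K / L * exp_weight L t0 t / 2 ^ n) with (2 * e) by (unfold e; field; lra).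
    lra. }
  intros t. exact (is_derive_ext y x t _ (fun s => eq_sym (Hxy s)) (Hy t)).
Qed.

End PicardLimit.

Lemma ode_solution_exists : exists g, ode_solution g /\ g t0 = x0.
Proof.
  assert (Hlim :
    forall t, {l | forall n, Rabs (l - picard n t) <= K / L * exp_weight L t0 t / 2 ^ n}).
  { intros t. apply limit_of_halving_steps. intros n.
    eapply Rle_trans; [apply picard_step_bound|]. right. unfold Rdiv. ring. }
  set (x := fun t => proj1_sig (Hlim t)).
  assert (Hx : forall n t, Rabs (x t - picard n t) <= K / L * exp_weight L t0 t / 2 ^ n)
    by (intros n t; exact (proj2_sig (Hlim t) n)).
  exists x. split; [apply picard_limit_solution | apply picard_limit_at_t0]; exact Hx.
Qed.

End LipschitzODE.

(** * Right-hand sides clamped to a box *)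

Definition clamp (a b x : R) : R := Rmax a (Rmin b x).

Lemma clamp_in (a b x : R) : a <= b -> a <= clamp a b x <= b.
Proof. intros. unfold clamp, Rmax, Rmin. repeat destruct Rle_dec; lra. Qed.

Lemma clamp_id (a b x : R) : a <= x <= b -> clamp a b x = x.
Proof. intros. unfold clamp, Rmax, Rmin. repeat destruct Rle_dec; lra. Qed.

Lemma clamp_lipschitz (a b x y : R) : Rabs (clamp a b x - clamp a b y) <= Rabs (x - y).
Proof.
  pose proof (Rle_abs (x - y)). pose proof (Rle_abs (- (x - y))). rewrite Rabs_Ropp in *.
  unfold clamp, Rmax, Rmin. apply Rabs_le. repeat destruct Rle_dec; lra.
Qed.

Lemma continuous_clamp (a b t : R) : continuous (clamp a b) t.
Proof.
  apply continuous_of_lipschitz with 1. intros y. rewrite Rmult_1_l. apply clamp_lipschitz.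
Qed.

Lemma exists_bound_on_list {T : Type} (f : T -> R) (l : list T) :
  exists B, forall t, List.In t l -> f t <= B.
Proof.
  induction l as [|x l [B HB]]; [exists 0; intros t []|].
  exists (Rmax (f x) B). intros t [<-|Ht]; [apply Rmax_l|].
  eapply Rle_trans; [apply HB, Ht | apply Rmax_r].
Qed.

Lemma continuous_bounded_on_rectangle (P : R * R -> R) (a b c d : R) :
  (forall p, continuous P p) ->
  exists B, forall u v, a <= u <= b -> c <= v <= d -> Rabs (P (u, v)) <= B.
Proof.
  intros HP.
  set (pt := fun t : Compactness.Tn 2 R => let '(u, (v, _)) := t in (u, v)).
  assert (Hdelta :
    forall t, {del : posreal | forall q, ball (pt t) del q -> Rabs (P q - P (pt t)) < 1}).
  { intros t. apply constructive_indefinite_description.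
    destruct (proj1 (filterlim_locally _ _) (HP (pt t)) (mkposreal 1 Rlt_0_1)) as [del Hdel].
    exists del. exact Hdel. }
  apply NNPP. intros Hnot.
  apply (Compactness.compactness_list 2 (a, (c, tt)) (b, (d, tt)) (fun t => proj1_sig (Hdelta t))).
  intros [l Hl]. apply Hnot.
  destruct (exists_bound_on_list (fun t => Rabs (P (pt t)) + 1) l) as [B HB].
  exists B. intros u v Hu Hv.
  destruct (Hl (u, (v, tt))) as [t [Hin [_ Hclose]]]; [simpl; tauto|].
  assert (Hball : ball (pt t) (proj1_sig (Hdelta t)) (u, v)).
  { destruct t as [t1 [t2 []]]. simpl in Hclose. split; apply Hclose. }
  pose proof (proj2_sig (Hdelta t) _ Hball). pose proof (HB t Hin).
  pose proof (Rabs_triang_inv (P (u, v)) (P (pt t))). simpl in *. lra.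
Qed.

Section ClampedRHS.

Variables (phi dphi : R -> R -> R) (a b c d : R).
Hypothesis a_le_b : a <= b.
Hypothesis c_le_d : c <= d.
Hypothesis phi_continuous : forall p, continuous (fun p : R * R => phi (fst p) (snd p)) p.
Hypothesis dphi_continuous : forall p, continuous (fun p : R * R => dphi (fst p) (snd p)) p.
Hypothesis phi_derive : forall s z, is_derive (phi s) z (dphi s z).

Definition clamped_rhs (s x : R) : R := phi (clamp a b s) (clamp c d x).

Lemma clamped_rhs_continuous (p : R * R) :
  continuous (fun p : R * R => clamped_rhs (fst p) (snd p)) p.
Proof.
  destruct p as [s x]. unfold clamped_rhs.
  apply (continuous_comp_2 (fun p : R * R => clamp a b (fst p))
                           (fun p : R * R => clamp c d (snd p)) phi).
  - apply (continuous_comp fst (clamp a b)); [apply continuous_fst | apply continuous_clamp].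
  - apply (continuous_comp snd (clamp c d)); [apply continuous_snd | apply continuous_clamp].
  - apply phi_continuous.
Qed.

Lemma clamped_rhs_bounded : exists K, forall s x, Rabs (clamped_rhs s x) <= K.
Proof.
  destruct (continuous_bounded_on_rectangle (fun p => phi (fst p) (snd p)) a b c d phi_continuous)
    as [K HK].
  exists K. intros s x. apply (HK (clamp a b s) (clamp c d x)); apply clamp_in; assumption.
Qed.

Lemma clamped_rhs_lipschitz :
  exists L, 0 < L /\ forall s x y, Rabs (clamped_rhs s x - clamped_rhs s y) <= L * Rabs (x - y).
Proof.
  destruct (continuous_bounded_on_rectangle (fun p => dphi (fst p) (snd p)) a b c d dphi_continuous)
    as [B HB].
  assert (HB0 : 0 <= B) by (eapply Rle_trans; [apply Rabs_pos | apply (HB a c)]; lra).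
  exists (B + 1). split; [lra|].
  intros s x y. unfold clamped_rhs. pose proof (clamp_in a b s a_le_b) as Hs.
  eapply Rle_trans.
  - apply (lipschitz_on_of_derive_bounded (phi (clamp a b s)) (dphi (clamp a b s)) c d B);
      [ apply phi_derive | intros z Hz; apply (HB _ _ Hs Hz) | apply clamp_in; assumption ..].
  - pose proof (clamp_lipschitz c d x y). pose proof (Rabs_pos (clamp c d x - clamp c d y)). nra.
Qed.

Lemma clamped_rhs_solution_exists (t0 x0 : R) :
  exists g, ode_solution clamped_rhs g /\ g t0 = x0.
Proof.
  destruct clamped_rhs_bounded as [K HK]. destruct clamped_rhs_lipschitz as [L [HL HLip]].
  exact (ode_solution_exists clamped_rhs K L HK HL HLip clamped_rhs_continuous t0 x0).
Qed.

Lemma clamped_rhs_solutions_keep_order (g1 g2 : R -> R) (s1 s2 : R) :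
  ode_solution clamped_rhs g1 -> ode_solution clamped_rhs g2 -> g1 s2 < g2 s2 -> g1 s1 < g2 s1.
Proof.
  destruct clamped_rhs_bounded as [K HK]. destruct clamped_rhs_lipschitz as [L [HL HLip]].
  exact (ode_solutions_keep_order clamped_rhs K L HK HL HLip g1 g2 s1 s2).
Qed.

End ClampedRHS.

(** * Outgoing null rays near the apparent horizons *)

Lemma scaled_atan_bounds (x : R) : -1 < 2 / PI * atan x < 1.
Proof.
  pose proof (atan_bound x). pose proof PI_RGT_0.
  split; apply Rmult_lt_reg_l with (PI / 2); try lra; field_simplify; lra.
Qed.

Lemma continuous_comp_fst (f : R -> R) (p : R * R) :
  (forall v, continuous f v) -> continuous (fun q : R * R => f (fst q)) p.
Proof. intros Hf. destruct p as [v r]. apply (continuous_comp fst f), Hf. apply continuous_fst. Qed.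

Section OutgoingNullGeodesics.

Variables (A F : R -> R -> R) (rp rm : R -> R) (rc v0 : R) (U : R -> R -> R).
Hypothesis HAsm : smooth_vr A.
Hypothesis HFsm : smooth_vr F.
Hypothesis HApos : forall v r, 0 <= r -> 0 < A v r.
Hypothesis HFpos : forall v r, 0 <= r -> 0 < F v r.
Hypothesis Hroots : forall v, 0 < rm v < rp v.
Hypothesis Hrp_dec : forall v, exists d, is_derive rp v d /\ d < 0.
Hypothesis Hrm_inc : forall v, exists d, is_derive rm v d /\ 0 < d.
Hypothesis Hrp_lim : is_lim rp p_infty rc.
Hypothesis Hrm_lim : is_lim rm p_infty rc.
Hypothesis HU : compactified_U A F rp rm rc v0 U.

Local Notation phi := (outgoing_rhs A F rp rm).

Lemma rp_decreasing (x y : R) : x < y -> rp y < rp x.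
Proof.
  intros Hxy. enough (- rp x < - rp y) by lra.
  apply (strict_incr_of_derive_pos (fun v => - rp v)); [|exact Hxy].
  intros v. destruct (Hrp_dec v) as [d [Hd Hneg]].
  exists (- d). split; [exact (is_derive_opp rp v d Hd) | lra].
Qed.

Lemma rm_increasing (x y : R) : x < y -> rm x < rm y.
Proof. apply strict_incr_of_derive_pos, Hrm_inc. Qed.

Lemma rm_lt_rc (v : R) : rm v < rc.
Proof. apply (lt_lim_of_strict_incr rm rc rm_increasing Hrm_lim). Qed.

Lemma rc_lt_rp (v : R) : rc < rp v.
Proof.
  enough (- rp v < - rc) by lra.
  apply (lt_lim_of_strict_incr (fun v => - rp v) (- rc)).
  - intros x y Hxy. pose proof (rp_decreasing x y Hxy). lra.
  - exact (is_lim_opp rp p_infty rc Hrp_lim).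
Qed.

Lemma horizons_in_strip (s : R) : v0 <= s -> rm v0 <= rm s /\ rp s <= rp v0.
Proof.
  intros Hs. destruct (Req_dec s v0) as [->|Hne]; [lra|].
  pose proof (rm_increasing v0 s ltac:(lra)). pose proof (rp_decreasing v0 s ltac:(lra)). lra.
Qed.

Definition outgoing_rhs_dr (v r : R) : R :=
  / 2 * ((Derive (A v) r * F v r + A v r * Derive (F v) r) * (r - rp v) * (r - rm v)
         + (A v r * F v r) * ((r - rm v) + (r - rp v))).

Lemma outgoing_rhs_derive (v r : R) : is_derive (phi v) r (outgoing_rhs_dr v r).
Proof.
  unfold outgoing_rhs, outgoing_rhs_dr.
  assert (EA : ex_derive (A v) r) by exact (proj1 HAsm 1%nat v r).
  assert (EF : ex_derive (F v) r) by exact (proj1 HFsm 1%nat v r).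
  auto_derive; [repeat split; assumption|].
  change (fun x => A v x) with (A v). change (fun x => F v x) with (F v). field.
Qed.

Lemma continuous_rp_fst (p : R * R) : continuous (fun q : R * R => rp (fst q)) p.
Proof.
  apply continuous_comp_fst. intros v. destruct (Hrp_dec v) as [d [Hd _]].
  exact (is_derive_continuous rp v d Hd).
Qed.

Lemma continuous_rm_fst (p : R * R) : continuous (fun q : R * R => rm (fst q)) p.
Proof.
  apply continuous_comp_fst. intros v. destruct (Hrm_inc v) as [d [Hd _]].
  exact (is_derive_continuous rm v d Hd).
Qed.

Local Ltac continuity_in_vr v r :=
  repeat match goal with
  | |- continuous (fun y => @?f y * @?g y) _ => apply (continuous_mult (K := R_AbsRing) f g)
  | |- continuous (fun y => @?f y + @?g y) _ =>
      apply (continuous_plus (V := R_NormedModule) f g)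
  | |- continuous (fun y => @?f y - @?g y) _ =>
      apply (continuous_minus (V := R_NormedModule) f g)
  | |- continuous (fun _ => _) _ => apply continuous_const
  | |- continuous (fun y => snd y) _ => apply continuous_snd
  | |- continuous (fun y => rp (fst y)) _ => apply continuous_rp_fst
  | |- continuous (fun y => rm (fst y)) _ => apply continuous_rm_fst
  | |- continuous (fun y => A (fst y) (snd y)) _ => exact (proj2 HAsm 0%nat v r)
  | |- continuous (fun y => F (fst y) (snd y)) _ => exact (proj2 HFsm 0%nat v r)
  | |- continuous (fun y => Derive (A (fst y)) (snd y)) _ => exact (proj2 HAsm 1%nat v r)
  | |- continuous (fun y => Derive (F (fst y)) (snd y)) _ => exact (proj2 HFsm 1%nat v r)
  end.

Lemma outgoing_rhs_continuous (p : R * R) : continuous (fun p : R * R => phi (fst p) (snd p)) p.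
Proof. unfold outgoing_rhs. destruct p as [v r]. continuity_in_vr v r. Qed.

Lemma outgoing_rhs_dr_continuous (p : R * R) :
  continuous (fun p : R * R => outgoing_rhs_dr (fst p) (snd p)) p.
Proof. unfold outgoing_rhs_dr. destruct p as [v r]. continuity_in_vr v r. Qed.

Local Notation Phi V := (clamped_rhs phi v0 V (rm v0) (rp v0)).

Lemma strip_solution_exists (V t x : R) : v0 <= V -> exists g, ode_solution (Phi V) g /\ g t = x.
Proof.
  intros HV. pose proof (Hroots v0).
  apply (clamped_rhs_solution_exists phi outgoing_rhs_dr); try lra.
  - apply outgoing_rhs_continuous.
  - apply outgoing_rhs_dr_continuous.
  - apply outgoing_rhs_derive.
Qed.

Lemma strip_solutions_keep_order (V : R) (g1 g2 : R -> R) (s1 s2 : R) : v0 <= V ->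
  ode_solution (Phi V) g1 -> ode_solution (Phi V) g2 -> g1 s2 < g2 s2 -> g1 s1 < g2 s1.
Proof.
  intros HV. pose proof (Hroots v0).
  apply (clamped_rhs_solutions_keep_order phi outgoing_rhs_dr); try lra.
  - apply outgoing_rhs_continuous.
  - apply outgoing_rhs_dr_continuous.
  - apply outgoing_rhs_derive.
Qed.

Lemma strip_solution_derive (V : R) (g : R -> R) (s : R) : ode_solution (Phi V) g ->
  v0 <= s <= V -> rm v0 <= g s <= rp v0 -> is_derive g s (phi s (g s)).
Proof.
  intros Hg Hs Hx. specialize (Hg s). unfold clamped_rhs in Hg. now rewrite !clamp_id in Hg.
Qed.

Lemma outgoing_rhs_at_rc (s : R) : phi s rc < 0.
Proof.
  unfold outgoing_rhs. pose proof (rm_lt_rc s). pose proof (rc_lt_rp s). pose proof (Hroots s).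
  pose proof (HApos s rc ltac:(lra)). pose proof (HFpos s rc ltac:(lra)).
  assert (Hk : 0 < / 2 * (A s rc * F s rc) * (rc - rm s))
    by (repeat apply Rmult_lt_0_compat; lra).
  replace (/ 2 * (A s rc * F s rc) * (rc - rp s) * (rc - rm s))
    with (/ 2 * (A s rc * F s rc) * (rc - rm s) * (rc - rp s)) by ring.
  set (k := / 2 * (A s rc * F s rc) * (rc - rm s)) in *. nra.
Qed.

Lemma rp_minus_solution_continuous (V : R) (g : R -> R) (x : R) : ode_solution (Phi V) g ->
  continuous (fun s => rp s - g s) x.
Proof.
  intros Hg. destruct (Hrp_dec x) as [d [Hd _]].
  exact (is_derive_continuous _ _ _ (is_derive_minus _ _ _ _ _ Hd (Hg x))).
Qed.

Lemma rp_minus_solution_decreases_at_zero (V : R) (g : R -> R) (c : R) :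
  ode_solution (Phi V) g -> v0 <= c <= V -> g c = rp c ->
  exists d, is_derive (fun s => rp s - g s) c d /\ d < 0.
Proof.
  intros Hg Hc Hgc. destruct (Hrp_dec c) as [d [Hd Hneg]].
  pose proof (horizons_in_strip c ltac:(lra)). pose proof (Hroots c).
  exists (d - phi c (g c)). split.
  - exact (is_derive_minus _ _ _ _ _ Hd (strip_solution_derive V g c Hg Hc ltac:(lra))).
  - rewrite Hgc. unfold outgoing_rhs. ring_simplify. lra.
Qed.

Lemma ray_before_outer_horizon (V v : R) (g : R -> R) : v0 <= v <= V ->
  ode_solution (Phi V) g -> g v = rp v -> forall s, v0 <= s < v -> rc < g s < rp s.
Proof.
  intros Hv Hg Hgv s Hs. split.
  - enough (0 < g s - rc) by lra.
    apply (pos_of_derive_neg_at_zeros (fun s => g s - rc) s v); [lra | | |].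
    + intros x. exact (is_derive_continuous _ _ _
                         (is_derive_minus _ _ _ _ _ (Hg x) (is_derive_const rc x))).
    + rewrite Hgv. pose proof (rc_lt_rp v). lra.
    + intros c Hc Hgc. pose proof (rm_lt_rc v0). pose proof (rc_lt_rp v0).
      exists (phi c (g c) - 0). split.
      * exact (is_derive_minus _ _ _ _ _ (strip_solution_derive V g c Hg ltac:(lra) ltac:(lra))
                                         (is_derive_const rc c)).
      * replace (g c) with rc by lra. pose proof (outgoing_rhs_at_rc c). lra.
  - enough (0 < rp s - g s) by lra.
    apply (pos_before_zero_of_derive_neg_at_zeros (fun s => rp s - g s) v0 v);
      [intros x; exact (rp_minus_solution_continuous V g x Hg) | cbv beta; lra | | lra].
    intros c Hc Hgc. apply (rp_minus_solution_decreases_at_zero V); [exact Hg | lra | lra].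
Qed.

Lemma ray_before_inner_horizon (V v : R) (g : R -> R) : v0 <= v <= V ->
  ode_solution (Phi V) g -> g v = rm v -> forall s, v0 <= s < v -> rm s < g s < rp s.
Proof.
  intros Hv Hg Hgv s Hs. split.
  - enough (0 < g s - rm s) by lra.
    apply (pos_before_zero_of_derive_neg_at_zeros (fun s => g s - rm s) v0 v);
      [ | cbv beta; lra | | lra].
    + intros x. destruct (Hrm_inc x) as [d [Hd _]].
      exact (is_derive_continuous _ _ _ (is_derive_minus _ _ _ _ _ (Hg x) Hd)).
    + intros c Hc Hgc. destruct (Hrm_inc c) as [d [Hd Hpos]].
      pose proof (horizons_in_strip c ltac:(lra)). pose proof (Hroots c).
      exists (phi c (g c) - d). split.
      * exact (is_derive_minus _ _ _ _ _ (strip_solution_derive V g c Hg ltac:(lra) ltac:(lra)) Hd).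
      * replace (g c) with (rm c) by lra. unfold outgoing_rhs. ring_simplify. lra.
  - enough (0 < rp s - g s) by lra.
    apply (pos_of_derive_neg_at_zeros (fun s => rp s - g s) s v); [lra | | |].
    + intros x. exact (rp_minus_solution_continuous V g x Hg).
    + rewrite Hgv. pose proof (Hroots v). lra.
    + intros c Hc Hgc. apply (rp_minus_solution_decreases_at_zero V); [exact Hg | lra | lra].
Qed.

Lemma U_along_strip_solution (V v : R) (g : R -> R) : v0 <= v <= V -> ode_solution (Phi V) g ->
  (forall s, v0 <= s <= v -> rm v0 <= g s <= rp v0) -> U v (g v) = U v0 (g v0).
Proof.
  intros Hv Hg Hstrip. destruct HU as [_ [_ Hconst]].
  apply (Hconst g v0 v ltac:(lra)); [|lra].
  intros s Hs. pose proof (Hstrip s Hs) as Hgs. pose proof (Hroots v0). split; [lra|].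
  apply (strip_solution_derive V); [exact Hg | lra | exact Hgs].
Qed.

Lemma U_outer_horizon (V v : R) (g : R -> R) : v0 <= v <= V -> ode_solution (Phi V) g ->
  g v = rp v -> U v (rp v) = U v0 (g v0) /\ 0 < g v0.
Proof.
  intros Hv Hg Hgv.
  assert (Hstrip : forall s, v0 <= s <= v -> rm v0 <= g s <= rp v0).
  { intros s Hs. pose proof (horizons_in_strip s ltac:(lra)). pose proof (rm_lt_rc v0).
    destruct (Req_dec s v) as [->|Hne]; [rewrite Hgv; pose proof (Hroots v); lra|].
    pose proof (ray_before_outer_horizon V v g Hv Hg Hgv s ltac:(lra)). lra. }
  pose proof (Hstrip v0 ltac:(lra)). pose proof (Hroots v0).
  split; [rewrite <- Hgv; apply (U_along_strip_solution V); assumption | lra].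
Qed.

Lemma U_inner_horizon (V v : R) (g : R -> R) : v0 <= v <= V -> ode_solution (Phi V) g ->
  g v = rm v -> U v (rm v) = U v0 (g v0) /\ 0 < g v0.
Proof.
  intros Hv Hg Hgv.
  assert (Hstrip : forall s, v0 <= s <= v -> rm v0 <= g s <= rp v0).
  { intros s Hs. pose proof (horizons_in_strip s ltac:(lra)).
    destruct (Req_dec s v) as [->|Hne]; [rewrite Hgv; pose proof (Hroots v); lra|].
    pose proof (ray_before_inner_horizon V v g Hv Hg Hgv s ltac:(lra)). lra. }
  pose proof (Hstrip v0 ltac:(lra)). pose proof (Hroots v0).
  split; [rewrite <- Hgv; apply (U_along_strip_solution V); assumption | lra].
Qed.

Lemma U_initial_decreasing (r1 r2 : R) : 0 < r1 < r2 -> U v0 r2 < U v0 r1.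
Proof.
  intros Hr. destruct HU as [_ [HU0 _]]. rewrite !HU0 by lra.
  pose proof (rm_lt_rc v0). pose proof (Hroots v0). pose proof PI_RGT_0.
  assert (atan (r1 / rc) < atan (r2 / rc)).
  { apply atan_increasing. unfold Rdiv. apply Rmult_lt_compat_r; [apply Rinv_0_lt_compat|]; lra. }
  assert (0 < 2 / PI) by (apply Rdiv_lt_0_compat; lra).
  nra.
Qed.

Lemma U_outer_horizon_increasing (v w : R) : v0 <= v -> v < w -> U v (rp v) < U w (rp w).
Proof.
  intros Hv Hvw.
  destruct (strip_solution_exists w v (rp v) ltac:(lra)) as [gv [Hgv Egv]].
  destruct (strip_solution_exists w w (rp w) ltac:(lra)) as [gw [Hgw Egw]].
  destruct (U_outer_horizon w v gv ltac:(lra) Hgv Egv) as [-> _].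
  destruct (U_outer_horizon w w gw ltac:(lra) Hgw Egw) as [-> Hgw0].
  apply U_initial_decreasing. split; [exact Hgw0|].
  apply (strip_solutions_keep_order w gw gv v0 v); [lra | exact Hgw | exact Hgv |].
  rewrite Egv. apply (ray_before_outer_horizon w w gw); [lra | exact Hgw | exact Egw | lra].
Qed.

Lemma U_inner_horizon_decreasing (v w : R) : v0 <= v -> v < w -> U w (rm w) < U v (rm v).
Proof.
  intros Hv Hvw.
  destruct (strip_solution_exists w v (rm v) ltac:(lra)) as [gv [Hgv Egv]].
  destruct (strip_solution_exists w w (rm w) ltac:(lra)) as [gw [Hgw Egw]].
  destruct (U_inner_horizon w v gv ltac:(lra) Hgv Egv) as [-> Hgv0].
  destruct (U_inner_horizon w w gw ltac:(lra) Hgw Egw) as [-> _].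
  apply U_initial_decreasing. split; [exact Hgv0|].
  apply (strip_solutions_keep_order w gv gw v0 v); [lra | exact Hgv | exact Hgw |].
  rewrite Egv. apply (ray_before_inner_horizon w w gw); [lra | exact Hgw | exact Egw | lra].
Qed.

Lemma U_outer_below_inner (v : R) : v0 <= v -> U v (rp v) < U v (rm v).
Proof.
  intros Hv.
  destruct (strip_solution_exists v v (rp v) Hv) as [gp [Hgp Egp]].
  destruct (strip_solution_exists v v (rm v) Hv) as [gm [Hgm Egm]].
  destruct (U_outer_horizon v v gp ltac:(lra) Hgp Egp) as [-> _].
  destruct (U_inner_horizon v v gm ltac:(lra) Hgm Egm) as [-> Hgm0].
  apply U_initial_decreasing. split; [exact Hgm0|].
  apply (strip_solutions_keep_order v gm gp v0 v); [lra | exact Hgm | exact Hgp |].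
  rewrite Egp, Egm. apply Hroots.
Qed.

Lemma U_on_horizons_monotone :
  (forall v w, v0 <= v -> v < w -> U v (rp v) < U w (rp w)) /\
  (forall v w, v0 <= v -> v < w -> U w (rm w) < U v (rm v)) /\
  (forall v, v0 <= v -> U v (rp v) < U v (rm v)).
Proof.
  split; [exact U_outer_horizon_increasing|].
  split; [exact U_inner_horizon_decreasing | exact U_outer_below_inner].
Qed.

End OutgoingNullGeodesics.

Theorem theorem2
  (f A F : R -> R -> R) (rp rm : R -> R) (rc v0 : R) (U : R -> R -> R)
  (* regularity *)
  (HAsm : smooth_vr A) (HFsm : smooth_vr F)
  (* metric functions *)
  (HApos : forall v r, 0 <= r -> 0 < A v r)
  (HAinf : forall v, is_lim (A v) p_infty 1)
  (Hfinf : forall v, is_lim (f v) p_infty 1)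
  (Hf0 : forall v, f v 0 = 1)
  (Hdf0 : forall v, is_derive (f v) 0 0)
  (HdA0 : forall v, is_derive (A v) 0 0)
  (* exactly two roots r_-(v) < r_+(v), f = F (r - r_+)(r - r_-), F > 0 *)
  (Hroots : forall v, 0 < rm v < rp v)
  (Hfact : forall v r, 0 <= r -> f v r = F v r * (r - rp v) * (r - rm v))
  (HFpos : forall v r, 0 <= r -> 0 < F v r)
  (* (1) d_v r_+ < 0 *)
  (Hrp_dec : forall v, exists d, is_derive rp v d /\ d < 0)
  (* Case 2: d_v r_- > 0 (in particular (3): its sign never changes) *)
  (Hrm_inc : forall v, exists d, is_derive rm v d /\ 0 < d)
  (* (2) r_+-(v) -> r_c *)
  (Hrp_lim : is_lim rp p_infty rc)
  (Hrm_lim : is_lim rm p_infty rc)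
  (* (4) r-derivatives of A, F, h = A F have finite limits as v -> oo *)
  (HAlim : forall n r, exists l : R, is_lim (fun v => Derive_n (A v) n r) p_infty l)
  (HFlim : forall n r, exists l : R, is_lim (fun v => Derive_n (F v) n r) p_infty l)
  (Hhlim : forall n r, exists l : R,
     is_lim (fun v => Derive_n (fun r' => A v r' * F v r') n r) p_infty l)
  (* the compactified outgoing null coordinate *)
  (HU : compactified_U A F rp rm rc v0 U) :
  exists Upinf Uminf : R,
    is_lim (fun v => U v (rp v)) p_infty Upinf /\
    is_lim (fun v => U v (rm v)) p_infty Uminf /\
    -1 < U v0 (rp v0) /\ U v0 (rp v0) < Upinf /\ Upinf <= Uminf /\
    Uminf < U v0 (rm v0) /\ U v0 (rm v0) < 1 /\
    (type1 Upinf Uminf \/ type2 Upinf Uminf).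
Proof.
  destruct (U_on_horizons_monotone A F rp rm rc v0 U HAsm HFsm HApos HFpos Hroots
              Hrp_dec Hrm_inc Hrp_lim Hrm_lim HU) as (Hout & Hin & Hsep).
  destruct (incr_decr_limits (fun v => U v (rp v)) (fun v => U v (rm v)) v0 Hout Hin Hsep)
    as (Upinf & Uminf & Hlimp & Hlimm & Hp & Hpm & Hm).
  assert (Hbdry : forall r, 0 < r -> -1 < U v0 r < 1).
  { intros r Hr. destruct HU as [_ [HU0 _]]. rewrite HU0 by exact Hr.
    pose proof (scaled_atan_bounds (r / rc)). lra. }
  pose proof (Hroots v0).
  pose proof (Hbdry (rp v0) ltac:(lra)). pose proof (Hbdry (rm v0) ltac:(lra)).
  exists Upinf, Uminf. unfold type1, type2.
  repeat split; try assumption; lra.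
Qed.
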